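(* Let $(\mathcal V,\mathcal W,\lambda)$ be a FTvN system with center $C$. Then $\lambda(C)=\lambda(\mathcal V)\cap-\lambda(\mathcal V)$, i.e., $\lambda(C)$ is the lineality space of the convex cone $\lambda(\mathcal V)$. Consequently: (a) $\lambda(\mathcal V)$ is pointed if and only if $C=\{0\}$; (b) $\lambda(\mathcal V)$ is a linear subspace of $\mathcal W$ if and only if $C=\mathcal V$.
   Context: A Fan-Theobald-von Neumann (FTvN) system is a triple $(\mathcal V,\mathcal W,\lambda)$ where $\mathcal V,\mathcal W$ are real inner product spaces and $\lambda:\mathcal V\to\mathcal W$ is a map such that: (A1) $\|\lambda(x)\|=\|x\|$ for all $x$; (A2) $\langle x,y\rangle\le\langle\lambda(x),\lambda(y)\rangle$ for all $x,y$; (A3) for every $c\in\mathcal V$ and $q\in\lambda(\mathcal V)$ there exists $x$ with $\lambda(x)=q$ and $\langle c,x\rangle=\langle\lambda(c),\lambda(x)\rangle$. Elements $x,y$ commute if $\langle x,y\rangle=\langle\lambda(x),\lambda(y)\rangle$; the center $C$ is the set of elements commuting with every element of $\mathcal V$. A cone $K$ is pointed if $K\cap -K=\{0\}$. *)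

From HB Require Import structures.
From mathcomp Require Import all_boot all_order all_algebra.
From mathcomp Require Import boolp classical_sets reals.
Set Implicit Arguments. Unset Strict Implicit. Unset Printing Implicit Defensive.
Import Order.TTheory GRing.Theory Num.Theory.
Local Open Scope ring_scope.
Local Open Scope classical_set_scope.

Record inner_product (R : realType) (V : lmodType R) := InnerProduct {
  ip :> V -> V -> R;
  ip_sym : forall x y, ip x y = ip y x;
  ip_linl : forall (a : R) (x y z : V), ip (a *: x + y) z = a * ip x z + ip y z;
  ip_ge0 : forall x, 0 <= ip x x;
  ip_eq0 : forall x, ip x x = 0 -> x = 0
}.

Definition ipnorm (R : realType) (V : lmodType R) (ipV : inner_product V) (x : V) : R :=
  Num.sqrt (ipV x x).

Definition FTvN_system (R : realType) (V W : lmodType R)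
  (ipV : inner_product V) (ipW : inner_product W) (lam : V -> W) : Prop :=
  [/\ (* A1 *) forall x, ipnorm ipW (lam x) = ipnorm ipV x,
      (* A2 *) forall x y, ipV x y <= ipW (lam x) (lam y) &
      (* A3 *) forall (c : V) (q : W), range lam q ->
                 exists x, lam x = q /\ ipV c x = ipW (lam c) (lam x)].

Definition commute_FTvN (R : realType) (V W : lmodType R)
  (ipV : inner_product V) (ipW : inner_product W) (lam : V -> W) (x y : V) : Prop :=
  ipV x y = ipW (lam x) (lam y).

Definition FTvN_center (R : realType) (V W : lmodType R)
  (ipV : inner_product V) (ipW : inner_product W) (lam : V -> W) : set V :=
  [set c | forall x, commute_FTvN ipV ipW lam c x].

Definition set_opp (R : realType) (W : lmodType R) (K : set W) : set W :=
  [set - w | w in K].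

Definition pointed (R : realType) (W : lmodType R) (K : set W) : Prop :=
  K `&` set_opp K = [set 0].

Definition linear_subspace (R : realType) (W : lmodType R) (S : set W) : Prop :=
  [/\ S 0, (forall x y, S x -> S y -> S (x + y)) &
      (forall (a : R) x, S x -> S (a *: x))].

From HB Require Import structures.
From mathcomp Require Import all_boot all_order all_algebra.
From mathcomp Require Import boolp classical_sets reals.
From mathcomp Require Import ring lra.

Set Implicit Arguments.
Unset Strict Implicit.
Unset Printing Implicit Defensive.
Import Order.TTheory GRing.Theory Num.Theory.
Local Open Scope ring_scope.
Local Open Scope classical_set_scope.

(* Only (A1) and (A2) are needed.  By (A1), (A2) and bilinearity,
   ||lam u + lam v||^2 = ||u||^2 + ||v||^2 + 2 <lam u, lam v> >= ||u + v||^2,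
   so lam u + lam v = 0 forces v = -u and <u, v> = <lam u, lam v>; comparing
   (A2) for the pairs (u, z) and (-u, z) then shows that u commutes with every
   z.  Conversely, for c in the center the same expansion with v = -c gives
   lam (-c) = - lam c.  If lam(V) is a
   subspace then - lam x = lam v for some v, so every x is central; if C = V
   then lam preserves inner products, hence is linear. *)

Section InnerProduct.
Variables (R : realType) (V : lmodType R) (i : inner_product V).

Lemma ipDl x y z : i (x + y) z = i x z + i y z.
Proof. by have := ip_linl i 1 x y z; rewrite scale1r mul1r. Qed.

Lemma ip0l z : i 0 z = 0.
Proof. by have := ipDl 0 0 z; rewrite addr0; lra. Qed.

Lemma ipZl a x z : i (a *: x) z = a * i x z.
Proof. by have := ip_linl i a x 0 z; rewrite addr0 ip0l addr0. Qed.

Lemma ipNl x z : i (- x) z = - i x z.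
Proof. by rewrite -scaleN1r ipZl mulN1r. Qed.

Lemma ipDr x y z : i z (x + y) = i z x + i z y.
Proof. by rewrite ip_sym ipDl !(ip_sym i z). Qed.

Lemma ipZr a x z : i z (a *: x) = a * i z x.
Proof. by rewrite ip_sym ipZl (ip_sym i z). Qed.

Lemma ipNr x z : i z (- x) = - i z x.
Proof. by rewrite ip_sym ipNl (ip_sym i z). Qed.

Lemma ip_selfD x y : i (x + y) (x + y) = i x x + i y y + 2 * i x y.
Proof. by rewrite !(ipDl, ipDr) (ip_sym i y x); ring. Qed.

End InnerProduct.

Lemma ip_preserving_linear (R : realType) (V W : lmodType R)
    (ipV : inner_product V) (ipW : inner_product W) (f : V -> W) :
    (forall x y, ipW (f x) (f y) = ipV x y) ->
  forall a x y, f (a *: x + y) = a *: f x + f y.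
Proof.
move=> fP a x y; apply: subr0_eq; apply: (ip_eq0 (i := ipW)).
rewrite !(ipDl, ipDr, ipNl, ipNr, ipZl, ipZr, fP).
by rewrite (ip_sym ipV y x); ring.
Qed.

Section FTvN.
Variables (R : realType) (V W : lmodType R)
  (ipV : inner_product V) (ipW : inner_product W) (lam : V -> W).
Hypothesis lamFTvN : FTvN_system ipV ipW lam.

Local Notation C := (FTvN_center ipV ipW lam).

Lemma ip_self_lam x : ipW (lam x) (lam x) = ipV x x.
Proof.
have [normP _ _] := lamFTvN.
have /(congr1 (fun t => t ^+ 2)) := normP x.
by rewrite !sqr_sqrtr ?ip_ge0.
Qed.

Lemma ip_le_lam x y : ipV x y <= ipW (lam x) (lam y).
Proof. by case: lamFTvN. Qed.

Lemma lam0 : lam 0 = 0.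
Proof. by apply: (ip_eq0 (i := ipW)); rewrite ip_self_lam ip0l. Qed.

Lemma lam_eq0 x : lam x = 0 -> x = 0.
Proof. by move=> lamx0; apply: (ip_eq0 (i := ipV)); rewrite -ip_self_lam lamx0 ip0l. Qed.

Lemma center0 : C 0.
Proof. by move=> x; rewrite /commute_FTvN lam0 !ip0l. Qed.

Lemma lam_addr_eq0 u v : lam u + lam v = 0 -> u + v = 0.
Proof.
move=> lamuv0; apply: (ip_eq0 (i := ipV)).
have : ipW (lam u + lam v) (lam u + lam v) = 0 by rewrite lamuv0 ip0l.
have := ip_ge0 ipV (u + v); have := ip_le_lam u v.
rewrite !ip_selfD !ip_self_lam; lra.
Qed.

Lemma center_lam_addr_eq0 u v : lam u + lam v = 0 -> C u.
Proof.
move=> lamuv0 z; rewrite /commute_FTvN.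
have vNu : v = - u := esym (addr0_eq (lam_addr_eq0 lamuv0)).
have lamNu : lam (- u) = - lam u by rewrite -vNu; exact/esym/addr0_eq.
have := ip_le_lam u z; have := ip_le_lam (- u) z.
by rewrite lamNu !ipNl; lra.
Qed.

Lemma lam_center_opp c : C c -> lam (- c) = - lam c.
Proof.
move=> Cc; apply/esym/addr0_eq; apply: (ip_eq0 (i := ipW)).
rewrite ip_selfD !ip_self_lam -(Cc (- c)) ipNl ipNr opprK; ring.
Qed.

Lemma lam_center : lam @` C = range lam `&` set_opp (range lam).
Proof.
rewrite eqEsubset; split => [_ [c Cc <-] | _ [[u _ <-] [_ [v _ <-] lamvNu]]].
  split; first by exists c.
  by exists (lam (- c)); [exists (- c) | rewrite lam_center_opp // opprK].
by exists u => //; apply: (center_lam_addr_eq0 (v := v)); rewrite -lamvNu addNr.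
Qed.

Lemma pointed_range_lam : pointed (range lam) <-> C = [set 0].
Proof.
rewrite /pointed -lam_center; split => [lamC0 | ->]; last by rewrite image_set1 lam0.
rewrite eqEsubset; split => [c Cc | _ ->] /=; last exact: center0.
by apply: lam_eq0; have : [set 0] (lam c) by rewrite -lamC0; exists c.
Qed.

Lemma linear_subspace_range_lam : linear_subspace (range lam) <-> C = setT.
Proof.
split => [[_ _ rangeZ] | CT].
  rewrite eqEsubset; split => // x _.
  have [v _ lamv] : range lam ((-1) *: lam x) by apply: rangeZ; exists x.
  by apply: (center_lam_addr_eq0 (v := v)); rewrite lamv scaleN1r subrr.
have lamP x y : ipW (lam x) (lam y) = ipV x y by have /(_ y) <- : C x by rewrite CT.
have lamD x y : lam (x + y) = lam x + lam y.
  by have := ip_preserving_linear lamP 1 x y; rewrite !scale1r.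
have lamZ a x : lam (a *: x) = a *: lam x.
  by have := ip_preserving_linear lamP a x 0; rewrite !addr0 lam0 addr0.
split; first by exists 0; rewrite ?lam0.
  by move=> _ _ [x _ <-] [y _ <-]; exists (x + y); rewrite ?lamD.
by move=> a _ [x _ <-]; exists (a *: x); rewrite ?lamZ.
Qed.

End FTvN.

Theorem corollary6p4 (R : realType) (V W : lmodType R)
  (ipV : inner_product V) (ipW : inner_product W) (lam : V -> W) :
  FTvN_system ipV ipW lam ->
  [/\ lam @` FTvN_center ipV ipW lam = range lam `&` set_opp (range lam),
      (pointed (range lam) <-> FTvN_center ipV ipW lam = [set 0]) &
      (linear_subspace (range lam) <-> FTvN_center ipV ipW lam = setT)].
Proof.
move=> lamFTvN; split.
- exact: lam_center.
- exact: pointed_range_lam.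
- exact: linear_subspace_range_lam.
Qed.
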